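(* Fix a monomial order on $S$. Let $J,E$ be ideals of $S$ and let $\mathcal G_J$ be a Gröbner basis of $J$. If $E$ is S-nice with respect to $\mathcal G_J$, then $(J,E)$ is a G-nice pair; more precisely, for every Gröbner basis $\mathcal G_E$ of $E$, $\mathcal G_E\cup\mathcal G_J$ is a Gröbner basis of $J+E$.
   Context: $K$ is a field and $S=K[x_1,\ldots,x_n]$ with a fixed monomial order. For $0\neq f\in S$, $\mathrm{in}(f)$ denotes its leading monomial and $\mathrm{LT}(f)$ its leading term; for an ideal $I$, $\mathrm{in}(I)$ is the ideal generated by the leading monomials of the nonzero elements of $I$. A pair $(J,E)$ of ideals is G-nice if $\mathrm{in}(J+E)=\mathrm{in}(J)+\mathrm{in}(E)$. For nonzero $f,g\in S$ the S-polynomial is $S(f,g)=\frac{\mathrm{lcm}(\mathrm{in}(f),\mathrm{in}(g))}{\mathrm{LT}(f)}f-\frac{\mathrm{lcm}(\mathrm{in}(f),\mathrm{in}(g))}{\mathrm{LT}(g)}g$. Given a Gröbner basis $\mathcal G_J$ of an ideal $J$, an ideal $E$ is called S-nice with respect to $\mathcal G_J$ if $S(f,g)\in E$ for all $f\in\mathcal G_J$ and all nonzero $g\in E$. *)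

From HB Require Import structures.
From mathcomp Require Import all_boot all_order all_algebra.
From mathcomp Require Import mpoly.
Set Implicit Arguments. Unset Strict Implicit. Unset Printing Implicit Defensive.
Import GRing.Theory.
Local Open Scope ring_scope.

Section Groebner.
Variables (n : nat) (K : fieldType).
Local Notation S := {mpoly K[n]}.
Local Notation mon := 'X_{1..n}.

(* A monomial order on the monomials of K[x_1..x_n], given as a relation
   "mo m1 m2" meaning m1 <= m2: a total order, compatible with
   multiplication, with 1 (= mnm0) as least element (hence a well-order,
   by Dickson's lemma). *)
Definition monomial_order (mo : rel mon) : Prop :=
  [/\ reflexive mo, antisymmetric mo, transitive mo & total mo] /\
  (forall m1 m2 m, mo m1 m2 -> mo (mnm_add m1 m) (mnm_add m2 m)) /\
  (forall m, mo mnm0 m).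

(* Leading monomial in(f): the mo-largest monomial of the support of f
   (meaningful for f != 0). *)
Definition lm (mo : rel mon) (f : S) : mon :=
  foldr (fun m acc => if mo acc m then m else acc) mnm0 (msupp f).

Definition lc (mo : rel mon) (f : S) : K := f@_(lm mo f).
Definition LT (mo : rel mon) (f : S) : S := lc mo f *: 'X_[lm mo f].

Definition spoly (mo : rel mon) (f g : S) : S :=
  let L := mlcm (lm mo f) (lm mo g) in
  (lc mo f)^-1 *: ('X_[mnm_sub L (lm mo f)] * f)
  - (lc mo g)^-1 *: ('X_[mnm_sub L (lm mo g)] * g).

Definition is_ideal (I : S -> Prop) : Prop :=
  [/\ I 0, (forall a b, I a -> I b -> I (a + b))
    & (forall r a, I a -> I (r * a))].

Definition gen_ideal (A : S -> Prop) (f : S) : Prop :=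
  exists s : seq (S * S), (forall p, p \in s -> A p.2) /\
                          f = \sum_(p <- s) p.1 * p.2.

Definition ideal_sum (I J : S -> Prop) (f : S) : Prop :=
  exists a b, [/\ I a, J b & f = a + b].

Definition ideal_eq (I J : S -> Prop) : Prop := forall f, I f <-> J f.

Definition init_ideal (mo : rel mon) (I : S -> Prop) : S -> Prop :=
  gen_ideal (fun h => exists f, [/\ I f, f != 0 & h = 'X_[lm mo f]]).

Definition groebner_basis (mo : rel mon) (I : S -> Prop) (G : seq S) : Prop :=
  (forall g, g \in G -> I g /\ g != 0) /\
  ideal_eq (init_ideal mo I)
           (gen_ideal (fun h => exists2 g, g \in G & h = 'X_[lm mo g])).

Definition G_nice (mo : rel mon) (J E : S -> Prop) : Prop :=
  ideal_eq (init_ideal mo (ideal_sum J E))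
           (ideal_sum (init_ideal mo J) (init_ideal mo E)).

Definition S_nice (mo : rel mon) (GJ : seq S) (E : S -> Prop) : Prop :=
  forall f g, f \in GJ -> E g -> g != 0 -> E (spoly mo f g).

End Groebner.

(* The inclusion
   in(J) + in(E) <= in(J + E) is formal.  For the converse, write a nonzero
   h in J + E as h = a + b (a in J, b in E) and descend on a common bound m
   of the supports of a and b.  If the terms at m survive in h, lm h is lm a
   or lm b.  Otherwise lm a = lm b = m, some g in G_J has lm g | lm b, and
   subtracting from b the multiple t of g with the same leading term keeps
   b - t in E (it is a multiple of S(g, b)) and a + t in J, while lowering
   the bound.  The descent terminates because monomial orders are well
   orders, which follows from Dickson's lemma.  Once (J, E) is G-nice, the
   union of Groebner bases of J and E is a Groebner basis of J + E. *)

From HB Require Import structures.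
From mathcomp Require Import all_boot all_order all_algebra.
From mathcomp Require Import mpoly.
From Stdlib Require Import Classical ClassicalEpsilon.
Set Implicit Arguments. Unset Strict Implicit. Unset Printing Implicit Defensive.
Import GRing.Theory.

Lemma min_attained (g : nat -> nat) (i : nat) :
  exists j, i <= j /\ forall k, i <= k -> g j <= g k.
Proof.
suff bounded v j : i <= j -> g j <= v ->
    exists j0, i <= j0 /\ forall k, i <= k -> g j0 <= g k.
  exact: (bounded (g i) i).
elim: v j => [|v IH] j hij hgj.
  by exists j; split=> // k _; rewrite (leq_trans hgj).
have [[k hik hlt]|hmin] := classic (exists2 k, i <= k & g k < g j).
  by apply: (IH k) => //; rewrite -ltnS (leq_trans hlt).
exists j; split=> // k hik; rewrite leqNgt; apply/negP => hlt.
by apply: hmin; exists k.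
Qed.

Lemma chain_trans (T : Type) (R : T -> T -> Prop) (h : nat -> T) :
  (forall x y z, R x y -> R y z -> R x z) ->
  (forall k, R (h k) (h k.+1)) -> forall a b, a < b -> R (h a) (h b).
Proof.
move=> Rtr Rstep a; elim=> // b IH; rewrite ltnS leq_eqVlt => /orP [/eqP ->|hab].
  exact: Rstep.
exact: Rtr (IH hab) (Rstep b).
Qed.

(* Every sequence of naturals has a nondecreasing subsequence: take
   successive positions of tail minima. *)
Lemma nondecreasing_subseq (g : nat -> nat) : exists phi : nat -> nat,
  forall a b, a < b -> phi a < phi b /\ g (phi a) <= g (phi b).
Proof.
pose argmin i := sval (constructive_indefinite_description _ (min_attained g i)).
have argminP i : i <= argmin i /\ forall k, i <= k -> g (argmin i) <= g k.
  by case: (svalP (constructive_indefinite_description _ (min_attained g i))).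
pose start := fix start k := if k is k'.+1 then (argmin (start k')).+1 else 0.
exists (fun k => argmin (start k)).
apply: (chain_trans (R := fun x y => x < y /\ g x <= g y)).
  by move=> x y z [h1 h2] [h3 h4]; split; [exact: ltn_trans h3|exact: leq_trans h4].
move=> k; have [hk _] := argminP (start k.+1); split; first exact: hk.
by apply: (proj2 (argminP _)); apply: leq_trans (proj1 (argminP _)) (ltnW hk).
Qed.

(* A sequence of monomials has a subsequence that is nondecreasing in every
   coordinate of s (refine coordinate by coordinate). *)
Lemma coordwise_subseq n (f : nat -> 'X_{1..n}) (s : seq 'I_n) :
  exists phi : nat -> nat, forall a b, a < b ->
    phi a < phi b /\ forall j, j \in s -> f (phi a) j <= f (phi b) j.
Proof.
elim: s => [|i s [phi Hphi]]; first by exists id.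
have [psi Hpsi] := nondecreasing_subseq (fun k => f (phi k) i).
exists (fun k => phi (psi k)) => a b hab.
have [h1 h2] := Hpsi a b hab; have [h3 h4] := Hphi _ _ h1.
by split=> // j; rewrite inE => /orP [/eqP ->|]; last exact: h4.
Qed.

Lemma dickson n (f : nat -> 'X_{1..n}) : exists a b, a < b /\ (f a <= f b)%MM.
Proof.
have [phi Hphi] := coordwise_subseq f (enum 'I_n).
have [h1 h2] := Hphi 0 1 isT.
by exists (phi 0), (phi 1); split=> //; apply/mnm_lepP => j; rewrite h2 ?mem_enum.
Qed.

(* A relation without infinite descending chains is well founded
   (by dependent choice along non-accessible elements). *)
Lemma wf_no_descending_chain (T : Type) (R : T -> T -> Prop) :
  (forall f : nat -> T, ~ (forall k, R (f k.+1) (f k))) -> well_founded R.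
Proof.
move=> nochain x; apply: NNPP => hx.
have step (y : {y | ~ Acc R y}) : {z | ~ Acc R z /\ R z (sval y)}.
  apply: constructive_indefinite_description; case: y => y hy /=.
  apply: NNPP => hn; apply: hy; constructor => z hz.
  by apply: NNPP => hz'; apply: hn; exists z.
pose next y := exist (fun z => ~ Acc R z) _ (proj1 (svalP (step y))).
pose chain := fix chain k := if k is k'.+1 then next (chain k') else exist _ x hx.
apply: (nochain (fun k => sval (chain k))) => k.
exact: (proj2 (svalP (step (chain k)))).
Qed.

Section MonomialOrder.
Variables (n : nat) (mo : rel 'X_{1..n}).
Hypothesis Hmo : monomial_order mo.

Lemma mo_refl m : mo m m.
Proof. by case: Hmo => [[h _ _ _] _]. Qed.

Lemma mo_anti m1 m2 : mo m1 m2 -> mo m2 m1 -> m1 = m2.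
Proof. by case: Hmo => [[_ h _ _] _] h1 h2; apply: h; rewrite h1 h2. Qed.

Lemma mo_trans m1 m2 m3 : mo m1 m2 -> mo m2 m3 -> mo m1 m3.
Proof. by case: Hmo => [[_ _ h _] _] h1 h2; apply: h h2. Qed.

Lemma mo_total m1 m2 : mo m1 m2 || mo m2 m1.
Proof. by case: Hmo => [[_ _ _ h] _]. Qed.

Lemma mo_addr m1 m2 m : mo m1 m2 -> mo (m1 + m)%MM (m2 + m)%MM.
Proof. by case: Hmo => [_ [h _]]; apply: h. Qed.

Lemma mo_0 m : mo 0%MM m.
Proof. by case: Hmo => [_ [_ h]]. Qed.

(* A monomial order refines divisibility, since 1 is its least element. *)
Lemma mo_of_divides m1 m2 : (m1 <= m2)%MM -> mo m1 m2.
Proof. by move=> hdiv; have := mo_addr m1 (mo_0 (m2 - m1)%MM); rewrite add0m submK. Qed.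

Definition mlt (x y : 'X_{1..n}) : bool := mo x y && (x != y).

Lemma mlt_trans x y z : mlt x y -> mlt y z -> mlt x z.
Proof.
move=> /andP [hxy nxy] /andP [hyz _]; rewrite /mlt (mo_trans hxy hyz) /=.
by apply: contraNneq nxy => exz; apply/eqP/mo_anti; rewrite // exz.
Qed.

(* Monomial orders are well orders: a descending chain would contradict
   Dickson's lemma. *)
Lemma mlt_wf : well_founded mlt.
Proof.
apply: wf_no_descending_chain => f fdesc.
have fchain : forall a b, a < b -> mlt (f b) (f a).
  apply: (chain_trans (R := fun x y => mlt y x)) => // x y z h1 h2.
  exact: mlt_trans h2 h1.
have [a [b [hab hdiv]]] := dickson f.
have /andP [hba /eqP] := fchain _ _ hab; apply.
exact: mo_anti (mo_of_divides hdiv).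
Qed.

End MonomialOrder.

Local Open Scope ring_scope.

Section LeadingMonomial.
Variables (n : nat) (K : fieldType) (mo : rel 'X_{1..n}).
Hypothesis Hmo : monomial_order mo.
Local Notation S := {mpoly K[n]}.

Lemma foldr_max (s : seq 'X_{1..n}) :
  let r := foldr (fun m acc => if mo acc m then m else acc) 0%MM s in
  (forall x, x \in s -> mo x r) /\ (s != [::] -> r \in s).
Proof.
elim: s => [|y s [IH1 IH2]] //=; set r := foldr _ _ s.
case: ifP => hry; split.
- move=> x; rewrite inE => /orP [/eqP ->|hx]; first exact: mo_refl.
  exact: mo_trans (IH1 _ hx) hry.
- by rewrite inE eqxx.
- move=> x; rewrite inE => /orP [/eqP ->|hx]; last exact: IH1.
  by have := mo_total Hmo r y; rewrite hry.
- move=> _; case: s IH1 IH2 @r hry => [|z s] IH1 IH2 r hry.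
    by rewrite /r /= mo_0 in hry.
  by rewrite inE IH2 ?orbT.
Qed.

Lemma nonzero_of_mcoeff (p : S) m : p@_m != 0 -> p != 0.
Proof. by apply: contraNneq => ->; rewrite mcoeff0. Qed.

Lemma lm_max (f : S) m : f@_m != 0 -> mo m (lm mo f).
Proof. by rewrite -mcoeff_msupp => h; apply: (proj1 (foldr_max _)). Qed.

Lemma lc_neq0 (f : S) : f != 0 -> lc mo f != 0.
Proof.
move=> hf; rewrite /lc -mcoeff_msupp; apply: (proj2 (foldr_max _)).
apply: contraNneq hf => hsupp; apply/eqP/mpolyP => m.
by rewrite mcoeff0; apply/memN_msupp_eq0; rewrite hsupp.
Qed.

Lemma lm_unique (f : S) m :
  f@_m != 0 -> (forall m', f@_m' != 0 -> mo m' m) -> lm mo f = m.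
Proof.
move=> hm hbound; have hf := nonzero_of_mcoeff hm.
exact: mo_anti (hbound _ (lc_neq0 hf)) (lm_max hm).
Qed.

End LeadingMonomial.

Section Ideals.
Variables (n : nat) (K : fieldType).
Local Notation S := {mpoly K[n]}.

Lemma gen_ideal_is_ideal (A : S -> Prop) : is_ideal (gen_ideal A).
Proof.
split.
- by exists [::]; split=> //; rewrite big_nil.
- move=> a b [s1 [h1 ->]] [s2 [h2 ->]]; exists (s1 ++ s2); split.
    by move=> p; rewrite mem_cat => /orP [hp|hp]; [apply: h1|apply: h2].
  by rewrite big_cat.
- move=> r a [s [h ->]]; exists [seq (r * p.1, p.2) | p <- s]; split.
    by move=> p /mapP [q hq ->] /=; apply: h.
  by rewrite big_map mulr_sumr; apply: eq_bigr => p _; rewrite mulrA.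
Qed.

Lemma gen_ideal_min (A I : S -> Prop) : is_ideal I -> (forall a, A a -> I a) ->
  forall f, gen_ideal A f -> I f.
Proof.
move=> [h0 hD hM] hA f [s [hs ->]]; elim: s hs => [|p s IH] hs.
  by rewrite big_nil.
rewrite big_cons; apply: hD; first by apply/hM/hA/hs; rewrite inE eqxx.
by apply: IH => q hq; apply: hs; rewrite inE hq orbT.
Qed.

Lemma gen_ideal_sub (A : S -> Prop) a : A a -> gen_ideal A a.
Proof.
move=> ha; exists [:: (1, a)]; split; last by rewrite big_seq1 mul1r.
by move=> p; rewrite inE => /eqP ->.
Qed.

Lemma gen_ideal_mono (A B : S -> Prop) : (forall a, A a -> B a) ->
  forall f, gen_ideal A f -> gen_ideal B f.
Proof.
move=> hAB; apply: gen_ideal_min (gen_ideal_is_ideal B) _.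
by move=> a /hAB /gen_ideal_sub.
Qed.

Lemma ideal_sum_is_ideal (I J : S -> Prop) :
  is_ideal I -> is_ideal J -> is_ideal (ideal_sum I J).
Proof.
move=> [i0 iD iM] [j0 jD jM]; split.
- by exists 0, 0; split; rewrite ?addr0.
- move=> _ _ [a1 [b1 [h1 h2 ->]]] [a2 [b2 [h3 h4 ->]]].
  exists (a1 + a2), (b1 + b2); split; [exact: iD|exact: jD|].
  by rewrite addrACA.
- move=> r _ [a [b [h1 h2 ->]]]; exists (r * a), (r * b).
  by split; [exact: iM|exact: jM|rewrite mulrDr].
Qed.

Lemma ideal_sum_l (I J : S -> Prop) a : is_ideal J -> I a -> ideal_sum I J a.
Proof. by move=> [j0 _ _] ha; exists a, 0; split; rewrite ?addr0. Qed.

Lemma ideal_sum_r (I J : S -> Prop) a : is_ideal I -> J a -> ideal_sum I J a.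
Proof. by move=> [i0 _ _] ha; exists 0, a; split; rewrite ?add0r. Qed.

Lemma ideal_scale (I : S -> Prop) c a : is_ideal I -> I a -> I (c *: a).
Proof. by move=> [_ _ hM] ha; rewrite -mul_mpolyC; apply: hM. Qed.

(* If a monomial lies in an ideal generated by monomials, then one of the
   generators divides it (compare coefficients at that monomial). *)
Lemma monomial_mem (G : seq 'X_{1..n}) l :
  gen_ideal (fun h : S => exists2 m, m \in G & h = 'X_[m]) 'X_[l] ->
  exists2 m, m \in G & (m <= l)%MM.
Proof.
move=> [s [hs he]].
have [/hasP [m hm hdiv]|hnone] := boolP (has (fun m => m <= l)%MM G); first by exists m.
have := congr1 (mcoeff l) he; rewrite mcoeffX eqxx raddf_sum /= big1_seq.
  by move/eqP; rewrite oner_eq0.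
move=> p hp; have [m hm ->] := hs p hp; apply/eqP; rewrite mcoeff_eq0.
rewrite (perm_mem (msuppMX _ _)); apply/negP => /mapP [m' _ hl].
by move/negP: hnone; apply; apply/hasP; exists m; rewrite // hl lem_addr.
Qed.

End Ideals.

Section InitialIdeals.
Variables (n : nat) (K : fieldType) (mo : rel 'X_{1..n}).
Local Notation S := {mpoly K[n]}.

Lemma init_ideal_is_ideal (I : S -> Prop) : is_ideal (init_ideal mo I).
Proof. exact: gen_ideal_is_ideal. Qed.

Lemma lm_in_init (I : S -> Prop) a : I a -> a != 0 -> init_ideal mo I 'X_[lm mo a].
Proof. by move=> ha an0; apply: gen_ideal_sub; exists a. Qed.

Lemma init_sum_supset (J E : S -> Prop) : is_ideal J -> is_ideal E ->
  forall f, ideal_sum (init_ideal mo J) (init_ideal mo E) f ->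
            init_ideal mo (ideal_sum J E) f.
Proof.
move=> HJ HE _ [x [y [hx hy ->]]].
case: (init_ideal_is_ideal (ideal_sum J E)) => _ hD _; apply: hD.
- apply: (gen_ideal_mono _ hx) => _ [g [hg gn0 ->]].
  by exists g; split=> //; apply: ideal_sum_l.
- apply: (gen_ideal_mono _ hy) => _ [g [hg gn0 ->]].
  by exists g; split=> //; apply: ideal_sum_r.
Qed.

Lemma groebner_basis_sum (J E : S -> Prop) (GJ GE : seq S) :
  is_ideal J -> is_ideal E -> G_nice mo J E ->
  groebner_basis mo J GJ -> groebner_basis mo E GE ->
  groebner_basis mo (ideal_sum J E) (GE ++ GJ).
Proof.
move=> HJ HE GN [GJmem GJinit] [GEmem GEinit]; split.
  move=> g; rewrite mem_cat => /orP [/GEmem|/GJmem] [hg gn0].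
  - by split=> //; apply: ideal_sum_r.
  - by split=> //; apply: ideal_sum_l.
pose lmGen (G : seq S) := fun h : S => exists2 g, g \in G & h = 'X_[lm mo g].
have lmGen_cat G1 : {subset G1 <= GE ++ GJ} ->
    forall f, gen_ideal (lmGen G1) f -> gen_ideal (lmGen (GE ++ GJ)) f.
  by move=> hsub; apply: gen_ideal_mono => _ [g /hsub hg ->]; exists g.
move=> f; split.
- move/GN => [x [y [/GJinit hx /GEinit hy ->]]].
  case: (gen_ideal_is_ideal (lmGen (GE ++ GJ))) => _ hD _; apply: hD.
  + by apply: (lmGen_cat GJ _ _ hx) => g hg; rewrite mem_cat hg orbT.
  + by apply: (lmGen_cat GE _ _ hy) => g hg; rewrite mem_cat hg.
- apply: gen_ideal_min (init_ideal_is_ideal _) _ f => _ [g hg ->].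
  move: hg; rewrite mem_cat => /orP [/GEmem|/GJmem] [hg gn0].
  + exact: lm_in_init (ideal_sum_r HJ hg) gn0.
  + exact: lm_in_init (ideal_sum_l HE hg) gn0.
Qed.

End InitialIdeals.

Section SupportBound.
Variables (n : nat) (K : fieldType) (mo : rel 'X_{1..n}).
Hypothesis Hmo : monomial_order mo.
Local Notation S := {mpoly K[n]}.

Definition supp_below (p : S) (m : 'X_{1..n}) : Prop :=
  forall m', p@_m' != 0 -> mo m' m.

Lemma supp_below_add p q m : supp_below p m -> supp_below q m -> supp_below (p + q) m.
Proof.
move=> hp hq m'; rewrite mcoeffD.
by have [->|/hp //] := eqVneq p@_m' 0; rewrite add0r => /hq.
Qed.

Lemma supp_below_scale c p m : supp_below p m -> supp_below (c *: p) m.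
Proof.
by move=> hp m'; rewrite mcoeffZ; have [->|/hp //] := eqVneq p@_m' 0; rewrite mulr0 eqxx.
Qed.

Lemma supp_strictly_below p m : supp_below p m -> p@_m = 0 ->
  forall m', p@_m' != 0 -> mlt mo m' m.
Proof.
move=> hp hm0 m' hm'; rewrite /mlt hp //=.
by apply: contraNneq hm' => ->; rewrite hm0.
Qed.

Lemma lm0 : lm mo (0 : S) = 0%MM.
Proof. by rewrite /lm msupp0. Qed.

Definition max_lm (p q : S) : 'X_{1..n} :=
  if mo (lm mo p) (lm mo q) then lm mo q else lm mo p.

Lemma supp_below_max_lm p q : supp_below p (max_lm p q) /\ supp_below q (max_lm p q).
Proof.
rewrite /max_lm; case: ifP => hpq; split=> m' /(lm_max Hmo) hm //.
- exact: (mo_trans Hmo hm hpq).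
- by apply: (mo_trans Hmo hm); have := mo_total Hmo (lm mo p) (lm mo q); rewrite hpq.
Qed.

Lemma max_lm_attained p q : (p != 0) || (q != 0) ->
  exists2 r, (r = p \/ r = q) /\ r != 0 & max_lm p q = lm mo r.
Proof.
move=> hpq; rewrite /max_lm; case: ifP => hle.
- have [q0|qn0] := eqVneq q 0; last by exists q => //; split=> //; right.
  have pn0 : p != 0 by move: hpq; rewrite q0 eqxx orbF.
  exists p; first by split=> //; left.
  by rewrite q0 lm0 in hle *; exact: (mo_anti Hmo (mo_0 Hmo _) hle).
- have [p0|pn0] := eqVneq p 0; last by exists p => //; split=> //; left.
  by rewrite p0 lm0 mo_0 in hle.
Qed.

Lemma common_strict_bound (p q : S) l : (p != 0) || (q != 0) ->
  (forall m', p@_m' != 0 -> mlt mo m' l) -> (forall m', q@_m' != 0 -> mlt mo m' l) ->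
  exists m', [/\ mlt mo m' l, supp_below p m' & supp_below q m'].
Proof.
move=> hpq hp hq; have [hbp hbq] := supp_below_max_lm p q.
exists (max_lm p q); split=> //.
have [r [[->|->] rn0] ->] := max_lm_attained hpq; [apply: hp|apply: hq].
all: exact: (lc_neq0 Hmo rn0).
Qed.

Lemma mcoeffXM_supp (f : S) u m : ('X_[u] * f)@_m != 0 ->
  exists2 m', m = (u + m')%MM & f@_m' != 0.
Proof.
rewrite mulrC -mcoeff_msupp (perm_mem (msuppMX f u)) => /mapP [m' hm' ->].
by exists m'; rewrite // -mcoeff_msupp.
Qed.

Lemma spoly_divides (f b : S) : (lm mo f <= lm mo b)%MM ->
  spoly mo f b = (lc mo f)^-1 *: ('X_[(lm mo b - lm mo f)%MM] * f) - (lc mo b)^-1 *: b.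
Proof.
move=> hdiv; rewrite /spoly mlcmE addmC submK //.
have -> : (lm mo b - lm mo b)%MM = 0%MM by apply/mnmP => i; rewrite mnmBE mnm0E subnn.
by rewrite mpolyX0 mul1r.
Qed.

End SupportBound.

Section SNice.
Variables (n : nat) (K : fieldType) (mo : rel 'X_{1..n}).
Hypothesis Hmo : monomial_order mo.
Local Notation S := {mpoly K[n]}.
Variables (J E : S -> Prop) (GJ : seq S).
Hypotheses (HJ : is_ideal J) (HE : is_ideal E) (HG : groebner_basis mo J GJ)
  (HS : S_nice mo GJ E).

(* Cancellation step: if lm b lies in in(J), then some g in GJ has lm g
   dividing lm b; the multiple t of g with the same leading term as b lies
   in J, and b - t is a scalar multiple of S(g, b), hence lies in E. *)
Lemma cancel_leading_term (b : S) : E b -> b != 0 -> init_ideal mo J 'X_[lm mo b] ->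
  exists t, [/\ J t, E (b - t), supp_below mo t (lm mo b) & t@_(lm mo b) = b@_(lm mo b)].
Proof.
move=> hb bn0 hin; case: HG => GJmem GJinit.
have hinGJ : gen_ideal (fun h : S => exists2 m, m \in map (lm mo) GJ & h = 'X_[m])
    'X_[lm mo b].
  apply: (gen_ideal_mono _ (proj1 (GJinit _) hin)) => _ [g hg ->].
  by exists (lm mo g); rewrite ?map_f.
have [_ /mapP [g hg ->] hdiv] := monomial_mem hinGJ.
have [gJ gn0] := GJmem g hg.
set u := (lm mo b - lm mo g)%MM.
have hum : (u + lm mo g)%MM = lm mo b by rewrite submK.
exists ((lc mo b / lc mo g) *: ('X_[u] * g)); split.
- by apply: (ideal_scale _ HJ); case: HJ => _ _; apply.
- have -> : b - (lc mo b / lc mo g) *: ('X_[u] * g) = - lc mo b *: spoly mo g b.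
    rewrite spoly_divides // -/u scalerBr !scalerA !mulNr divff ?lc_neq0 //.
    by rewrite scaleN1r opprK scaleNr addrC.
  exact: (ideal_scale _ HE (HS hg hb bn0)).
- apply: supp_below_scale => m /mcoeffXM_supp [m' -> hm'].
  by rewrite -hum addmC [(u + _)%MM]addmC; apply: (mo_addr Hmo); apply: (lm_max Hmo).
- have top : ('X_[u] * g)@_(lm mo b) = lc mo g by rewrite -hum mulrC mcoeffMX.
  by rewrite mcoeffZ top divfK ?(lc_neq0 Hmo).
Qed.

Lemma lm_in_init_sum_top (h a b : S) m : J a -> E b -> a + b = h ->
  supp_below mo a m -> supp_below mo b m -> h@_m != 0 ->
  ideal_sum (init_ideal mo J) (init_ideal mo E) 'X_[lm mo h].
Proof.
move=> ha hb hab ba bb hmn0.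
have -> : lm mo h = m by apply: (lm_unique Hmo hmn0); rewrite -hab; apply: supp_below_add.
have [am0|amn0] := eqVneq a@_m 0.
  have bmn0 : b@_m != 0 by rewrite -hab mcoeffD am0 add0r in hmn0.
  rewrite -(lm_unique Hmo bmn0 bb).
  apply: ideal_sum_r (init_ideal_is_ideal mo J) _.
  exact: (lm_in_init mo hb (nonzero_of_mcoeff bmn0)).
rewrite -(lm_unique Hmo amn0 ba).
apply: ideal_sum_l (init_ideal_is_ideal mo E) _.
exact: (lm_in_init mo ha (nonzero_of_mcoeff amn0)).
Qed.

(* Descent on a common bound m
   of the supports of a and b: if the terms at m cancel in h, the
   cancellation step moves the top term of b into a, lowering the bound. *)
Lemma lm_in_init_sum (h : S) : h != 0 -> forall m a b, J a -> E b -> a + b = h ->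
  supp_below mo a m -> supp_below mo b m ->
  ideal_sum (init_ideal mo J) (init_ideal mo E) 'X_[lm mo h].
Proof.
move=> hn0 m; elim/(well_founded_induction (mlt_wf Hmo)): m => m IH a b ha hb hab ba bb.
have descend a' b' : J a' -> E b' -> a' + b' = h -> a'@_m = 0 -> b'@_m = 0 ->
    supp_below mo a' m -> supp_below mo b' m ->
    ideal_sum (init_ideal mo J) (init_ideal mo E) 'X_[lm mo h].
  move=> ha' hb' hab' am0 bm0 ba' bb'.
  have ab0 : (a' != 0) || (b' != 0).
    rewrite -negb_and; apply: contra hn0 => /andP [/eqP a0 /eqP b0].
    by rewrite -hab' a0 b0 addr0.
  have [m' [hm' ba'' bb'']] := common_strict_bound Hmo ab0
    (supp_strictly_below ba' am0) (supp_strictly_below bb' bm0).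
  exact: (IH m' hm' a' b').
have [hm0|hmn0] := eqVneq h@_m 0; last exact: (lm_in_init_sum_top ha hb hab ba bb).
have hcoef : a@_m + b@_m = 0 by rewrite -mcoeffD hab.
have [am0|amn0] := eqVneq a@_m 0.
  by apply: (descend a b) => //; rewrite am0 add0r in hcoef.
have bmn0 : b@_m != 0.
  by apply: contraNneq amn0 => bm0; apply/eqP; rewrite -hcoef bm0 addr0.
have lmb : lm mo b = m := lm_unique Hmo bmn0 bb.
have hin : init_ideal mo J 'X_[lm mo b].
  rewrite lmb -(lm_unique Hmo amn0 ba).
  exact: (lm_in_init mo ha (nonzero_of_mcoeff amn0)).
have [t [tJ btE bt tm]] := cancel_leading_term hb (nonzero_of_mcoeff bmn0) hin.
rewrite lmb in bt tm.
apply: (descend (a + t) (b - t)) => //.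
- by case: HJ => _ hD _; apply: hD.
- by rewrite addrA addrAC addrK.
- by rewrite mcoeffD tm.
- by rewrite mcoeffB tm subrr.
- exact: supp_below_add.
- by apply: supp_below_add => //; rewrite -scaleN1r; apply: supp_below_scale.
Qed.

Lemma init_sum_subset (f : S) : init_ideal mo (ideal_sum J E) f ->
  ideal_sum (init_ideal mo J) (init_ideal mo E) f.
Proof.
apply: gen_ideal_min.
  exact: ideal_sum_is_ideal (init_ideal_is_ideal mo J) (init_ideal_is_ideal mo E).
move=> _ [h [[a [b [ha hb hab]]] hn0 ->]].
have [ba bb] := supp_below_max_lm Hmo a b.
exact: lm_in_init_sum hn0 _ _ _ ha hb (esym hab) ba bb.
Qed.

End SNice.

Theorem mainTheorem14 (n : nat) (K : fieldType) (mo : rel 'X_{1..n})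
    (J E : {mpoly K[n]} -> Prop) (GJ : seq {mpoly K[n]}) :
  monomial_order mo ->
  is_ideal J -> is_ideal E ->
  groebner_basis mo J GJ ->
  S_nice mo GJ E ->
  G_nice mo J E /\
  (forall GE : seq {mpoly K[n]},
     groebner_basis mo E GE -> groebner_basis mo (ideal_sum J E) (GE ++ GJ)).
Proof.
move=> Hmo HJ HE HG HS.
have GN : G_nice mo J E.
  move=> f; split; first exact: (init_sum_subset Hmo HJ HE HG HS).
  exact: (init_sum_supset HJ HE).
split=> // GE HGE.
exact: groebner_basis_sum HJ HE GN HG HGE.
Qed.
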